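(* Consider the NEAR-DGD$^t$ iteration $\mathbf{x}_k=\mathbf{Z}^t\mathbf{y}_k$, $\mathbf{y}_{k+1}=\mathbf{x}_k-\alpha\nabla\mathbf{f}(\mathbf{x}_k)$, $k=0,1,2,\ldots$, with fixed integer $t\ge1$, started from $y_{i,0}=s_0$ for all $i$ (a common point $s_0\in\mathbb{R}^p$). Suppose each $f_i$ is $\mu_i$-strongly convex with $L_i$-Lipschitz gradient, and let $0<\alpha<1/L$ with $L=\max_iL_i$. Then for all $k=1,2,\ldots$, $$\|\mathbf{x}_k\|\le D,\qquad \|\mathbf{y}_k\|\le D,\qquad D=\|\mathbf{y}_0-\mathbf{u}^\star\|+\frac{\nu+4}{\nu}\|\mathbf{u}^\star\|,$$ where $\mathbf{u}^\star=(u_1^\star;\ldots;u_n^\star)$ with $u_i^\star=\arg\min f_i$, $\nu=2\alpha\gamma$, $\gamma=\min_i\gamma_i$, $\gamma_i=\frac{\mu_iL_i}{\mu_i+L_i}$. The same bounds hold for the NEAR-DGD$^+$ iteration $\mathbf{x}_k=\mathbf{Z}^{t(k)}\mathbf{y}_k$, $\mathbf{y}_{k+1}=\mathbf{x}_k-\alpha\nabla\mathbf{f}(\mathbf{x}_k)$ for any sequence of positive integers $t(k)$.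
   Context: $n$ agents with functions $f_i:\mathbb{R}^p\to\mathbb{R}$. $\mathbf{W}$ is a symmetric doubly-stochastic $n\times n$ matrix of a connected network ($w_{ii}>0$, $w_{ij}>0$ iff $i,j$ neighbours), simple eigenvalue $1$, other eigenvalues in $(-1,1)$. $\mathbf{Z}=\mathbf{W}\otimes I_p$. Vectors in $\mathbb{R}^{np}$ are concatenations $\mathbf{x}=(x_1;\ldots;x_n)$, and $\nabla\mathbf{f}(\mathbf{x})=(\nabla f_1(x_1);\ldots;\nabla f_n(x_n))$. *)

From Stdlib Require Import Reals Lra.
Open Scope R_scope.

(* Vectors of R^p are functions nat -> R; only coordinates 0..p-1 matter. *)
Definition vec := nat -> R.

Fixpoint rsum (m : nat) (F : nat -> R) : R :=
  match m with O => 0 | S m' => rsum m' F + F m' end.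

Definition dot (p : nat) (x y : vec) : R := rsum p (fun l => x l * y l).
Definition vnorm (p : nat) (x : vec) : R := sqrt (dot p x x).
Definition vadd (x y : vec) : vec := fun l => x l + y l.
Definition vsub (x y : vec) : vec := fun l => x l - y l.
Definition vscale (a : R) (x : vec) : vec := fun l => a * x l.

(* Stacked vectors in R^{np}: agent index -> local vector in R^p. *)
Definition snorm (n p : nat) (X : nat -> vec) : R :=
  sqrt (rsum n (fun i => dot p (X i) (X i))).
Definition ssub (X Y : nat -> vec) : nat -> vec := fun i => vsub (X i) (Y i).

(* max / min of F 0, ..., F (n-1)  (intended for n >= 1) *)
Fixpoint rmax_upto (m : nat) (F : nat -> R) : R :=
  match m with O => F O | S m' => Rmax (rmax_upto m' F) (F m) end.
Fixpoint rmin_upto (m : nat) (F : nat -> R) : R :=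
  match m with O => F O | S m' => Rmin (rmin_upto m' F) (F m) end.
Definition rmaxn (n : nat) (F : nat -> R) : R := rmax_upto (n - 1) F.
Definition rminn (n : nat) (F : nat -> R) : R := rmin_upto (n - 1) F.

Definition is_gradient (p : nat) (f : vec -> R) (g : vec -> vec) : Prop :=
  forall x : vec, forall eps : R, 0 < eps -> exists delta : R, 0 < delta /\
    forall h : vec, vnorm p h < delta ->
      Rabs (f (vadd x h) - f x - dot p (g x) h) <= eps * vnorm p h.

Definition strongly_convex (p : nat) (mu : R) (f : vec -> R) : Prop :=
  forall (x y : vec) (th : R), 0 <= th <= 1 ->
    f (vadd (vscale th x) (vscale (1 - th) y))
      <= th * f x + (1 - th) * f y - mu / 2 * th * (1 - th) * (vnorm p (vsub x y))^2.

Definition lipschitz_grad (p : nat) (L : R) (g : vec -> vec) : Prop :=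
  forall x y : vec, vnorm p (vsub (g x) (g y)) <= L * vnorm p (vsub x y).

Inductive reach (n : nat) (W : nat -> nat -> R) (i : nat) : nat -> Prop :=
| reach_refl : reach n W i i
| reach_step : forall j k, reach n W i j -> (j < n)%nat -> (k < n)%nat ->
    0 < W j k -> reach n W i k.

(* W: symmetric doubly stochastic n x n matrix of a connected network,
   w_ii > 0, w_ij > 0 iff i,j neighbours (the network graph is the graph of
   positive entries), eigenvalue 1 simple, all other eigenvalues in (-1,1). *)
Definition mixing_matrix (n : nat) (W : nat -> nat -> R) : Prop :=
  (forall i j, (i < n)%nat -> (j < n)%nat -> W i j = W j i) /\
  (forall i j, (i < n)%nat -> (j < n)%nat -> 0 <= W i j) /\
  (forall i, (i < n)%nat -> rsum n (fun j => W i j) = 1) /\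
  (forall j, (j < n)%nat -> rsum n (fun i => W i j) = 1) /\
  (forall i, (i < n)%nat -> 0 < W i i) /\
  (forall i j, (i < n)%nat -> (j < n)%nat -> reach n W i j) /\
  (forall (lam : R) (v : nat -> R),
      (exists i, (i < n)%nat /\ v i <> 0) ->
      (forall i, (i < n)%nat -> rsum n (fun j => W i j * v j) = lam * v i) ->
      lam = 1 \/ (-1 < lam < 1)) /\
  (forall v : nat -> R,
      (forall i, (i < n)%nat -> rsum n (fun j => W i j * v j) = v i) ->
      forall i j, (i < n)%nat -> (j < n)%nat -> v i = v j).

(* Z X = (W (x) I_p) X, and its powers *)
Definition mix (n : nat) (W : nat -> nat -> R) (X : nat -> vec) : nat -> vec :=
  fun i l => rsum n (fun j => W i j * X j l).
Fixpoint mixpow (n : nat) (W : nat -> nat -> R) (t : nat) (X : nat -> vec)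
  : nat -> vec :=
  match t with O => X | S t' => mix n W (mixpow n W t' X) end.

Fixpoint near_dgd_y (n : nat) (W : nat -> nat -> R) (alpha : R)
  (g : nat -> vec -> vec) (tk : nat -> nat) (s0 : vec) (k : nat) : nat -> vec :=
  match k with
  | O => fun _ => s0
  | S k' =>
      let xk := mixpow n W (tk k') (near_dgd_y n W alpha g tk s0 k') in
      fun i l => xk i l - alpha * g i (xk i) l
  end.
Definition near_dgd_x (n : nat) (W : nat -> nat -> R) (alpha : R)
  (g : nat -> vec -> vec) (tk : nat -> nat) (s0 : vec) (k : nat) : nat -> vec :=
  mixpow n W (tk k) (near_dgd_y n W alpha g tk s0 k).

(* Each local gradient step x -> x - alpha grad f_i(x) contracts the distance to the
   minimiser u_i* by a factor sqrt (1 - 2 alpha gamma_i) <= 1 - nu/2; this follows from the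
   co-coercivity of the gradient of a strongly convex function with Lipschitz gradient.
   Mixing with the doubly stochastic matrix Z^t does not increase the stacked norm, and
   x_k - u* = Z^t (y_k - u* ) + (Z^t u* - u* ), so e_k = |y_k - u*| obeys
   e_(k+1) <= (1 - nu/2) (e_k + 2 |u*|), whence e_k <= e_0 + 4 |u*| / nu by induction.
   Finally |x_k| <= |y_k| <= e_k + |u*|. *)

From Stdlib Require Import Reals Lra Lia FunctionalExtensionality.
Open Scope R_scope.

Lemma rsum_ext m F G : (forall i, (i < m)%nat -> F i = G i) -> rsum m F = rsum m G.
Proof.
  induction m as [|m IH]; intros H; simpl; [reflexivity|].
  rewrite IH, H; [reflexivity | lia | intros i Hi; apply H; lia].
Qed.

Lemma rsum_le m F G : (forall i, (i < m)%nat -> F i <= G i) -> rsum m F <= rsum m G.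
Proof.
  induction m as [|m IH]; intros H; simpl; [lra|].
  apply Rplus_le_compat; [apply IH; intros i Hi|]; apply H; lia.
Qed.

Lemma rsum_nonneg m F : (forall i, (i < m)%nat -> 0 <= F i) -> 0 <= rsum m F.
Proof.
  induction m as [|m IH]; intros H; simpl; [lra|].
  apply Rplus_le_le_0_compat; [apply IH; intros i Hi|]; apply H; lia.
Qed.

Lemma rsum_plus m F G : rsum m (fun l => F l + G l) = rsum m F + rsum m G.
Proof. induction m as [|m IH]; simpl; [ring|]. rewrite IH; ring. Qed.

Lemma rsum_scal m a F : rsum m (fun l => a * F l) = a * rsum m F.
Proof. induction m as [|m IH]; simpl; [ring|]. rewrite IH; ring. Qed.

Lemma rsum_swap n m (F : nat -> nat -> R) :
  rsum n (fun i => rsum m (fun j => F i j)) = rsum m (fun j => rsum n (fun i => F i j)).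
Proof.
  induction n as [|n IH]; simpl.
  - induction m as [|m IHm]; simpl; [reflexivity|]. rewrite <- IHm; ring.
  - rewrite IH, <- rsum_plus; reflexivity.
Qed.

Lemma sq_weighted_mean_le m (w a : nat -> R) :
  (forall j, (j < m)%nat -> 0 <= w j) -> rsum m w = 1 ->
  rsum m (fun j => w j * a j) ^ 2 <= rsum m (fun j => w j * a j ^ 2).
Proof.
  intros w_ge0 w_sum1. set (s := rsum m (fun j => w j * a j)).
  assert (variance : rsum m (fun j => w j * (a j - s) ^ 2) =
    rsum m (fun j => w j * a j ^ 2) - 2 * s * rsum m (fun j => w j * a j) + s ^ 2 * rsum m w).
  { clearbody s. clear w_ge0 w_sum1.
    induction m as [|m IH]; cbn [rsum]; [ring|]. rewrite IH; ring. }
  assert (0 <= rsum m (fun j => w j * (a j - s) ^ 2)).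
  { apply rsum_nonneg; intros j Hj. apply Rmult_le_pos; [auto | apply pow2_ge_0]. }
  fold s in variance. rewrite w_sum1 in variance. nra.
Qed.

Lemma discriminant_le a b c :
  0 <= a -> (forall t, 0 <= t * t * a - 2 * t * b + c) -> b * b <= a * c.
Proof.
  intros a_ge0 quad. destruct (Req_dec a 0) as [a0|a_ne0].
  - subst a. destruct (Req_dec b 0) as [b0|b_ne0]; [subst b; lra|].
    specialize (quad ((c + 1) / (2 * b))).
    replace ((c + 1) / (2 * b) * ((c + 1) / (2 * b)) * 0 - 2 * ((c + 1) / (2 * b)) * b + c)
      with (-1) in quad by (field; exact b_ne0). lra.
  - specialize (quad (b / a)).
    replace (b / a * (b / a) * a - 2 * (b / a) * b + c) with ((a * c - b * b) / a) in quad
      by (field; exact a_ne0).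
    apply Rmult_le_compat_r with (r := a) in quad; [|lra].
    unfold Rdiv in quad. rewrite Rmult_assoc, Rinv_l, Rmult_1_r in quad by exact a_ne0. lra.
Qed.

Lemma le_sqrt_mult c A B : 0 <= A -> 0 <= B -> c * c <= A * B -> c <= sqrt A * sqrt B.
Proof.
  intros A_ge0 B_ge0 H. rewrite <- sqrt_mult by assumption.
  apply Rle_trans with (Rabs c); [apply Rle_abs|].
  rewrite <- sqrt_Rsqr_abs. apply sqrt_le_1_alt. exact H.
Qed.

(* Proves an identity between inner products that holds coordinatewise as a ring identity. *)
Ltac dot_ring p :=
  unfold dot; generalize p; let q := fresh in intro q; induction q; simpl; [ring | lra].

Section InnerProduct.
Variable p : nat.

Lemma dot_scale_l a x y : dot p (vscale a x) y = a * dot p x y.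
Proof. unfold vscale; dot_ring p. Qed.
Lemma dot_scale_r a x y : dot p x (vscale a y) = a * dot p x y.
Proof. unfold vscale; dot_ring p. Qed.
Lemma dot_sub_l x y z : dot p (vsub x y) z = dot p x z - dot p y z.
Proof. unfold vsub; dot_ring p. Qed.

Lemma dot_nonneg x : 0 <= dot p x x.
Proof. apply rsum_nonneg; intros; nra. Qed.

Lemma dot_cauchy_schwarz x y : dot p x y * dot p x y <= dot p x x * dot p y y.
Proof.
  apply discriminant_le; [apply dot_nonneg|]. intros t.
  replace (t * t * dot p x x - 2 * t * dot p x y + dot p y y)
    with (dot p (vsub (vscale t x) y) (vsub (vscale t x) y))
    by (unfold vsub, vscale; dot_ring p).
  apply dot_nonneg.
Qed.

Lemma dot_le_vnorm x y : dot p x y <= vnorm p x * vnorm p y.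
Proof. apply le_sqrt_mult; [apply dot_nonneg | apply dot_nonneg | apply dot_cauchy_schwarz]. Qed.

Lemma dot_isotropic_l x y : dot p x x = 0 -> dot p x y = 0.
Proof. intros x0. pose proof (dot_cauchy_schwarz x y) as CS. rewrite x0 in CS. nra. Qed.

Lemma vnorm_nonneg x : 0 <= vnorm p x.
Proof. apply sqrt_pos. Qed.

Lemma vnorm_sq x : vnorm p x ^ 2 = dot p x x.
Proof. unfold vnorm. rewrite <- Rsqr_pow2. apply Rsqr_sqrt, dot_nonneg. Qed.

Lemma vnorm_scale a x : vnorm p (vscale a x) = Rabs a * vnorm p x.
Proof.
  unfold vnorm. rewrite dot_scale_l, dot_scale_r, <- Rmult_assoc, <- sqrt_Rsqr_abs.
  apply sqrt_mult; [apply Rle_0_sqr | apply dot_nonneg].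
Qed.

End InnerProduct.

Section StackedNorm.
Variables n p : nat.

Definition sdot (X Y : nat -> vec) : R := rsum n (fun i => dot p (X i) (Y i)).

Lemma snorm_sdot X : snorm n p X = sqrt (sdot X X).
Proof. reflexivity. Qed.

Lemma sdot_nonneg X : 0 <= sdot X X.
Proof. apply rsum_nonneg; intros; apply dot_nonneg. Qed.

Lemma sdot_cauchy_schwarz X Y : sdot X Y * sdot X Y <= sdot X X * sdot Y Y.
Proof.
  apply discriminant_le; [apply sdot_nonneg|]. intros t.
  set (Z := fun i => vsub (vscale t (X i)) (Y i)).
  replace (t * t * sdot X X - 2 * t * sdot X Y + sdot Y Y) with (sdot Z Z); [apply sdot_nonneg|].
  unfold sdot, Z. induction n as [|m IH]; simpl; [ring|]. rewrite IH.
  unfold vsub, vscale, dot. clear IH. induction p as [|q IHq]; simpl; [ring | lra].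
Qed.

Lemma snorm_add X Y : snorm n p (fun i => vadd (X i) (Y i)) <= snorm n p X + snorm n p Y.
Proof.
  rewrite !snorm_sdot.
  assert (expand : sdot (fun i => vadd (X i) (Y i)) (fun i => vadd (X i) (Y i)) =
                   sdot X X + 2 * sdot X Y + sdot Y Y).
  { unfold sdot. induction n as [|m IH]; simpl; [ring|]. rewrite IH.
    unfold vadd, dot. clear IH. induction p as [|q IHq]; simpl; [ring | lra]. }
  pose proof (sdot_nonneg X) as XX_ge0. pose proof (sdot_nonneg Y) as YY_ge0.
  pose proof (le_sqrt_mult _ _ _ XX_ge0 YY_ge0 (sdot_cauchy_schwarz X Y)).
  rewrite expand, <- (sqrt_square (sqrt (sdot X X) + sqrt (sdot Y Y)))
    by (pose proof (sqrt_pos (sdot X X)); pose proof (sqrt_pos (sdot Y Y)); lra).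
  apply sqrt_le_1_alt.
  replace ((sqrt (sdot X X) + sqrt (sdot Y Y)) * (sqrt (sdot X X) + sqrt (sdot Y Y)))
    with (sqrt (sdot X X) * sqrt (sdot X X) + 2 * (sqrt (sdot X X) * sqrt (sdot Y Y))
          + sqrt (sdot Y Y) * sqrt (sdot Y Y)) by ring.
  rewrite !sqrt_sqrt by assumption. lra.
Qed.

Lemma snorm_ssub_triangle X Y Z :
  snorm n p (ssub X Z) <= snorm n p (ssub X Y) + snorm n p (ssub Y Z).
Proof.
  replace (ssub X Z) with (fun i => vadd (ssub X Y i) (ssub Y Z i)); [apply snorm_add|].
  do 2 (apply functional_extensionality; intro). unfold ssub, vadd, vsub. ring.
Qed.

Lemma snorm_le_local c X Y : 0 <= c ->
  (forall i, (i < n)%nat -> dot p (X i) (X i) <= c ^ 2 * dot p (Y i) (Y i)) ->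
  snorm n p X <= c * snorm n p Y.
Proof.
  intros c_ge0 local. rewrite !snorm_sdot, <- (sqrt_pow2 c c_ge0), <- sqrt_mult
    by (apply pow2_ge_0 || apply sdot_nonneg).
  apply sqrt_le_1_alt. unfold sdot. rewrite <- rsum_scal. apply rsum_le, local.
Qed.

Lemma snorm_opp X : snorm n p (fun i => vscale (-1) (X i)) = snorm n p X.
Proof.
  unfold snorm. f_equal. apply rsum_ext; intros i _.
  rewrite dot_scale_l, dot_scale_r. ring.
Qed.

Lemma snorm_ssub_le X Y : snorm n p (ssub X Y) <= snorm n p X + snorm n p Y.
Proof.
  replace (ssub X Y) with (fun i => vadd (X i) (vscale (-1) (Y i))).
  - rewrite <- (snorm_opp Y). apply snorm_add.
  - do 2 (apply functional_extensionality; intro). unfold ssub, vadd, vsub, vscale. ring.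
Qed.

Lemma snorm_le_ssub_add X Y : snorm n p X <= snorm n p (ssub X Y) + snorm n p Y.
Proof.
  replace X with (fun i => vadd (ssub X Y i) (Y i)) at 1; [apply snorm_add|].
  do 2 (apply functional_extensionality; intro). unfold ssub, vadd, vsub. ring.
Qed.

End StackedNorm.

Section FirstOrderCalculus.
Variables (p : nat) (f : vec -> R) (g : vec -> vec).
Hypothesis f_grad : is_gradient p f g.

Lemma gradient_taylor x d eps : 0 < eps -> exists th0, 0 < th0 /\
  forall th, 0 < th <= th0 ->
    Rabs (f (vadd x (vscale th d)) - f x - th * dot p (g x) d) <= th * eps.
Proof.
  intros eps_pos. set (nd := vnorm p d).
  assert (nd_ge0 : 0 <= nd) by apply vnorm_nonneg.
  destruct (f_grad x (eps / (nd + 1))) as [del [del_pos Hdel]].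
  { apply Rdiv_lt_0_compat; lra. }
  exists (del / (nd + 1)). split; [apply Rdiv_lt_0_compat; lra|].
  intros th [th_pos th_le].
  assert (norm_h : vnorm p (vscale th d) = th * nd)
    by (rewrite vnorm_scale, Rabs_right by lra; reflexivity).
  assert (small : th * nd < del).
  { apply Rmult_le_compat_r with (r := nd + 1) in th_le; [|lra].
    unfold Rdiv in th_le. rewrite Rmult_assoc, Rinv_l, Rmult_1_r in th_le by lra. nra. }
  rewrite <- norm_h in small. specialize (Hdel _ small).
  rewrite dot_scale_r, norm_h in Hdel. eapply Rle_trans; [exact Hdel|].
  assert (eps / (nd + 1) * nd <= eps).
  { apply Rmult_le_reg_r with (nd + 1); [lra|]. unfold Rdiv.
    replace (eps * / (nd + 1) * nd * (nd + 1)) with (eps * nd) by (field; lra). nra. }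
  nra.
Qed.

Variable mu : R.
Hypotheses (mu_ge0 : 0 <= mu) (f_sc : strongly_convex p mu f).

Lemma strongly_convex_first_order x z :
  f x + dot p (g x) (vsub z x) + mu / 2 * dot p (vsub z x) (vsub z x) <= f z.
Proof.
  set (d := vsub z x). set (Nd := dot p d d). set (gd := dot p (g x) d).
  assert (Nd_ge0 : 0 <= Nd) by apply dot_nonneg.
  apply Rle_plus_epsilon. intros eps eps_pos.
  destruct (gradient_taylor x d (eps / 2)) as [th0 [th0_pos taylor]]; [lra|].
  set (th := Rmin th0 (Rmin 1 (eps / (mu * Nd + 1)))).
  assert (th_pos : 0 < th).
  { apply Rmin_glb_lt; [lra|]. apply Rmin_glb_lt; [lra|]. apply Rdiv_lt_0_compat; nra. }
  assert (th_le1 : th <= 1) by (eapply Rle_trans; [apply Rmin_r | apply Rmin_l]).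
  assert (th_small : th * (mu * Nd) <= eps).
  { assert (th <= eps / (mu * Nd + 1)) by (eapply Rle_trans; [apply Rmin_r | apply Rmin_r]).
    apply Rmult_le_compat_r with (r := mu * Nd + 1) in H; [|nra].
    unfold Rdiv in H. rewrite Rmult_assoc, Rinv_l, Rmult_1_r in H by nra. nra. }
  specialize (taylor th (conj th_pos (Rmin_l _ _))).
  fold gd in taylor.
  pose proof (Rle_abs (- (f (vadd x (vscale th d)) - f x - th * gd))) as lower.
  rewrite Rabs_Ropp in lower.
  specialize (f_sc z x th (conj (Rlt_le _ _ th_pos) th_le1)).
  replace (vadd (vscale th z) (vscale (1 - th) x)) with (vadd x (vscale th d)) in f_sc
    by (apply functional_extensionality; intro l; unfold d, vadd, vscale, vsub; ring).
  rewrite vnorm_sq in f_sc. fold d Nd in f_sc.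
  (* dividing [th * gd - th * eps / 2 <= th * (f z - f x) - mu / 2 * th * (1 - th) * Nd] by th *)
  assert (th * (th * (mu * Nd)) <= th * eps) by (apply Rmult_le_compat_l; lra).
  apply Rmult_le_reg_l with th; [exact th_pos|]. lra.
Qed.

Variable L : R.
Hypotheses (L_pos : 0 < L) (g_lip : lipschitz_grad p L g).

Lemma dot_grad_shift_le x d s : 0 <= s ->
  dot p (vsub (g (vadd x (vscale s d))) (g x)) d <= L * s * dot p d d.
Proof.
  intros s_ge0. eapply Rle_trans; [apply dot_le_vnorm|].
  pose proof (g_lip (vadd x (vscale s d)) x) as lip.
  replace (vsub (vadd x (vscale s d)) x) with (vscale s d) in lip
    by (apply functional_extensionality; intro l; unfold vsub, vadd, vscale; ring).
  rewrite vnorm_scale, Rabs_right in lip by lra.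
  rewrite <- vnorm_sq. pose proof (vnorm_nonneg p d). nra.
Qed.

Lemma descent_lemma_approx x z N : (0 < N)%nat ->
  f z <= f x + dot p (g x) (vsub z x) + L / 2 * dot p (vsub z x) (vsub z x)
         + L * dot p (vsub z x) (vsub z x) / (2 * INR N).
Proof.
  intros N_pos. set (d := vsub z x). set (Nd := dot p d d). set (gd := dot p (g x) d).
  assert (N_gt0 : 0 < INR N) by (apply lt_0_INR; exact N_pos).
  set (h := / INR N). assert (h_pos : 0 < h) by (apply Rinv_0_lt_compat; exact N_gt0).
  set (pt := fun K : nat => vadd x (vscale (INR K * h) d)).
  (* chaining the first-order convexity inequality along the grid x = pt 0, ..., pt N = z *)
  assert (along : forall K,
    f (pt K) <= f x + INR K * h * gd + L * Nd * h ^ 2 * INR K * (INR K + 1) / 2).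
  { induction K as [|K IH].
    - replace (pt 0%nat) with x
        by (apply functional_extensionality; intro l; unfold pt, vadd, vscale; simpl; ring).
      simpl; lra.
    - pose proof (strongly_convex_first_order (pt (S K)) (pt K)) as chord.
      replace (vsub (pt K) (pt (S K))) with (vscale (- h) d) in chord
        by (apply functional_extensionality; intro l; unfold pt, vsub, vadd, vscale;
            rewrite S_INR; ring).
      assert (0 <= mu / 2 * dot p (vscale (- h) d) (vscale (- h) d))
        by (apply Rmult_le_pos; [lra | apply dot_nonneg]).
      pose proof (dot_grad_shift_le x d (INR (S K) * h)) as shift.
      change (vadd x (vscale (INR (S K) * h) d)) with (pt (S K)) in shift.
      rewrite dot_sub_l in shift. fold gd Nd in shift.
      apply (Rmult_le_compat_l h) in shift; [|lra | apply Rmult_le_pos; [apply pos_INR | lra]].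
      rewrite dot_scale_r in chord. rewrite S_INR in *. lra. }
  specialize (along N).
  replace (pt N) with z in along
    by (apply functional_extensionality; intro l; unfold pt, d, h, vadd, vscale, vsub;
        field; lra).
  replace (INR N * h) with 1 in along by (unfold h; field; lra).
  replace (L * Nd * h ^ 2 * INR N * (INR N + 1) / 2) with (L / 2 * Nd + L * Nd / (2 * INR N))
    in along by (unfold h; field; lra).
  lra.
Qed.

Lemma descent_lemma x z :
  f z <= f x + dot p (g x) (vsub z x) + L / 2 * dot p (vsub z x) (vsub z x).
Proof.
  set (Nd := dot p (vsub z x) (vsub z x)). assert (Nd_ge0 : 0 <= Nd) by apply dot_nonneg.
  apply Rle_plus_epsilon. intros eps eps_pos.
  destruct (archimed_cor1 (eps / (L * Nd + 1))) as [N [N_large N_pos]].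
  { apply Rdiv_lt_0_compat; nra. }
  pose proof (descent_lemma_approx x z N N_pos) as approx. fold Nd in approx.
  assert (N_gt0 : 0 < INR N) by (apply lt_0_INR; exact N_pos).
  enough (L * Nd / (2 * INR N) <= eps) by lra.
  apply Rlt_le, (Rmult_le_compat_l (L * Nd)) in N_large; [|nra].
  replace (L * Nd * (eps / (L * Nd + 1))) with (eps - eps / (L * Nd + 1)) in N_large
    by (field; nra).
  assert (0 < eps / (L * Nd + 1)) by (apply Rdiv_lt_0_compat; nra).
  replace (L * Nd / (2 * INR N)) with (L * Nd * / INR N / 2) by (field; lra).
  lra.
Qed.

End FirstOrderCalculus.

Lemma le_mul_of_forall_quadratic M B C : 0 <= M -> 0 <= B ->
  (forall t, t * (2 - M * t) * B <= C) -> B <= M * C.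
Proof.
  intros M_ge0 B_ge0 quad. destruct (Req_dec M 0) as [M0|M_ne0].
  - subst M. destruct (Req_dec B 0) as [B0|B_ne0]; [lra|].
    specialize (quad ((Rabs C + 1) / B)).
    replace ((Rabs C + 1) / B * (2 - 0 * ((Rabs C + 1) / B)) * B) with (2 * (Rabs C + 1))
      in quad by (field; exact B_ne0).
    pose proof (Rle_abs C). pose proof (Rabs_pos C). lra.
  - specialize (quad (1 / M)).
    replace (1 / M * (2 - M * (1 / M)) * B) with (B / M) in quad by (field; exact M_ne0).
    apply (Rmult_le_compat_l M) in quad; [|exact M_ge0].
    replace (M * (B / M)) with B in quad by (field; exact M_ne0). exact quad.
Qed.

Section Cocoercivity.
Variables (p : nat) (phi : vec -> R) (gphi : vec -> vec) (M : R).
Hypotheses (M_ge0 : 0 <= M)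
  (phi_lower : forall x z, phi x + dot p (gphi x) (vsub z x) <= phi z)
  (phi_upper : forall x z,
     phi z <= phi x + dot p (gphi x) (vsub z x) + M / 2 * dot p (vsub z x) (vsub z x)).

Lemma cocoercive_of_sandwich x y :
  dot p (vsub (gphi y) (gphi x)) (vsub (gphi y) (gphi x))
  <= M * dot p (vsub (gphi y) (gphi x)) (vsub y x).
Proof.
  set (b := vsub (gphi y) (gphi x)).
  apply le_mul_of_forall_quadratic; [exact M_ge0 | apply dot_nonneg|]. intros t.
  (* sandwich phi at y - t b between x and y, and at x + t b between y and x *)
  set (z := vsub y (vscale t b)). set (z' := vadd x (vscale t b)).
  pose proof (phi_lower x z). pose proof (phi_upper y z).
  pose proof (phi_lower y z'). pose proof (phi_upper x z').
  assert (dot p (gphi x) (vsub z x) + dot p (gphi y) (vsub z' y)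
          - dot p (gphi y) (vsub z y) - dot p (gphi x) (vsub z' x)
          - M / 2 * (dot p (vsub z y) (vsub z y) + dot p (vsub z' x) (vsub z' x))
          = t * (2 - M * t) * dot p b b - dot p b (vsub y x))
    by (unfold z, z', b, vsub, vadd, vscale; dot_ring p).
  lra.
Qed.

End Cocoercivity.

Section GradientStep.
Variables (p : nat) (mu L : R) (f : vec -> R) (g : vec -> vec).
Hypotheses (f_grad : is_gradient p f g) (mu_ge0 : 0 <= mu) (f_sc : strongly_convex p mu f)
  (L_pos : 0 < L) (g_lip : lipschitz_grad p L g).

Lemma grad_isotropic_at_minimizer u : (forall z, f u <= f z) -> dot p (g u) (g u) = 0.
Proof.
  intros u_min. set (G := dot p (g u) (g u)).
  pose proof (descent_lemma p f g f_grad mu mu_ge0 f_sc L L_pos g_lip u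
                (vsub u (vscale (1 / L) (g u)))) as descent.
  replace (vsub (vsub u (vscale (1 / L) (g u))) u) with (vscale (- (1 / L)) (g u)) in descent
    by (apply functional_extensionality; intro l; unfold vsub, vscale; ring).
  rewrite dot_scale_r, dot_scale_l, dot_scale_r in descent. fold G in descent.
  specialize (u_min (vsub u (vscale (1 / L) (g u)))).
  assert (G_ge0 : 0 <= G) by apply dot_nonneg.
  assert (- (1 / L) * G + L / 2 * (- (1 / L) * (- (1 / L) * G)) = - (G / (2 * L)))
    by (field; lra).
  assert (0 <= G / (2 * L)) by (apply Rmult_le_pos; [lra | apply Rlt_le, Rinv_0_lt_compat; lra]).
  assert (G / (2 * L) = 0) as G0 by lra.
  replace G with (G / (2 * L) * (2 * L)) by (field; lra). rewrite G0; ring.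
Qed.

Lemma strong_convexity_le_smoothness : (1 <= p)%nat -> mu <= L.
Proof.
  intros p_pos. set (x := fun _ : nat => 0). set (z := fun _ : nat => 1).
  pose proof (descent_lemma p f g f_grad mu mu_ge0 f_sc L L_pos g_lip x z).
  pose proof (strongly_convex_first_order p f g f_grad mu mu_ge0 f_sc x z).
  assert (0 < dot p (vsub z x) (vsub z x)).
  { destruct p as [|q]; [lia|]. unfold dot; simpl.
    replace (vsub z x q) with 1 by (unfold vsub, z, x; ring).
    assert (0 <= rsum q (fun l => vsub z x l * vsub z x l)) by (apply rsum_nonneg; intros; nra).
    lra. }
  nra.
Qed.

Lemma grad_cocoercive x y : (1 <= p)%nat ->
  dot p (vsub (g y) (g x)) (vsub (g y) (g x)) + mu * L * dot p (vsub y x) (vsub y x)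
  <= (L + mu) * dot p (vsub (g y) (g x)) (vsub y x).
Proof.
  intros p_pos.
  (* f - mu/2 |.|^2 is convex and (L - mu)-smooth *)
  set (phi := fun w => f w - mu / 2 * dot p w w).
  set (gphi := fun w => vsub (g w) (vscale mu w)).
  assert (square_expand : forall x z, dot p z z =
    dot p x x + 2 * dot p x (vsub z x) + dot p (vsub z x) (vsub z x))
    by (intros; unfold vsub; dot_ring p).
  assert (gphi_expand : forall x z, dot p (gphi x) (vsub z x)
    = dot p (g x) (vsub z x) - mu * dot p x (vsub z x))
    by (intros; unfold gphi, vsub, vscale; dot_ring p).
  assert (phi_lower : forall a z, phi a + dot p (gphi a) (vsub z a) <= phi z).
  { intros a z. unfold phi. rewrite (square_expand a z), gphi_expand.
    pose proof (strongly_convex_first_order p f g f_grad mu mu_ge0 f_sc a z). lra. }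
  assert (phi_upper : forall a z, phi z <= phi a + dot p (gphi a) (vsub z a)
                                   + (L - mu) / 2 * dot p (vsub z a) (vsub z a)).
  { intros a z. unfold phi. rewrite (square_expand a z), gphi_expand.
    pose proof (descent_lemma p f g f_grad mu mu_ge0 f_sc L L_pos g_lip a z). lra. }
  pose proof (strong_convexity_le_smoothness p_pos).
  pose proof (cocoercive_of_sandwich p phi gphi (L - mu) ltac:(lra) phi_lower phi_upper x y)
    as coco.
  replace (vsub (gphi y) (gphi x)) with (vsub (vsub (g y) (g x)) (vscale mu (vsub y x))) in coco
    by (apply functional_extensionality; intro l; unfold gphi, vsub, vscale; ring).
  assert (dot p (vsub (vsub (g y) (g x)) (vscale mu (vsub y x)))
                (vsub (vsub (g y) (g x)) (vscale mu (vsub y x)))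
          - (L - mu) * dot p (vsub (vsub (g y) (g x)) (vscale mu (vsub y x))) (vsub y x)
          = dot p (vsub (g y) (g x)) (vsub (g y) (g x)) + mu * L * dot p (vsub y x) (vsub y x)
            - (L + mu) * dot p (vsub (g y) (g x)) (vsub y x))
    by (unfold vsub, vscale; dot_ring p).
  lra.
Qed.

Lemma gradient_step_contraction u x alpha :
  (forall z, f u <= f z) -> 0 < alpha -> alpha * L < 1 ->
  dot p (vsub (fun l => x l - alpha * g x l) u) (vsub (fun l => x l - alpha * g x l) u)
  <= (1 - 2 * alpha * (mu * L / (mu + L))) * dot p (vsub x u) (vsub x u).
Proof.
  intros u_min alpha_pos alphaL_lt1. destruct (Nat.eq_dec p 0) as [p0|p_ne0].
  { rewrite p0. unfold dot; simpl. lra. }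
  assert (p_pos : (1 <= p)%nat) by lia.
  pose proof (strong_convexity_le_smoothness p_pos).
  pose proof (grad_isotropic_at_minimizer u u_min) as gu0.
  pose proof (grad_cocoercive u x p_pos) as coco.
  set (D := dot p (vsub x u) (vsub x u)) in *.
  set (P := dot p (g x) (vsub x u)). set (Q := dot p (g x) (g x)).
  assert (Q_ge0 : 0 <= Q) by apply dot_nonneg.
  replace (dot p (vsub (g x) (g u)) (vsub (g x) (g u))) with Q in coco.
  2:{ symmetry. transitivity (Q - 2 * dot p (g u) (g x) + dot p (g u) (g u));
        [unfold Q, vsub; dot_ring p | rewrite (dot_isotropic_l p _ _ gu0), gu0; ring]. }
  replace (dot p (vsub (g x) (g u)) (vsub x u)) with P in coco
    by (unfold P; rewrite dot_sub_l, (dot_isotropic_l p _ _ gu0); ring).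
  replace (dot p (vsub (fun l => x l - alpha * g x l) u) (vsub (fun l => x l - alpha * g x l) u))
    with (D - 2 * alpha * P + alpha ^ 2 * Q) by (unfold D, P, Q, vsub; dot_ring p).
  replace (1 - 2 * alpha * (mu * L / (mu + L))) with ((mu + L - 2 * alpha * mu * L) / (mu + L))
    by (field; lra).
  apply Rmult_le_reg_r with (mu + L); [lra|].
  replace ((mu + L - 2 * alpha * mu * L) / (mu + L) * D * (mu + L))
    with ((mu + L - 2 * alpha * mu * L) * D) by (field; lra).
  (* the gradient term is absorbed because alpha * (mu + L) <= 2 *)
  assert (0 <= alpha * Q * (2 - alpha * (mu + L))) by (apply Rmult_le_pos; nra).
  nra.
Qed.

End GradientStep.

Lemma mix_ssub n W X Y : mix n W (ssub X Y) = ssub (mix n W X) (mix n W Y).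
Proof.
  apply functional_extensionality; intro i; apply functional_extensionality; intro l.
  unfold mix, ssub, vsub.
  rewrite (rsum_ext n _ (fun j => W i j * X j l + -1 * (W i j * Y j l))) by (intros; ring).
  rewrite rsum_plus, rsum_scal. ring.
Qed.

Lemma mixpow_ssub n W t X Y :
  mixpow n W t (ssub X Y) = ssub (mixpow n W t X) (mixpow n W t Y).
Proof. induction t as [|t IH]; simpl; [reflexivity|]. rewrite IH. apply mix_ssub. Qed.

Section DoublyStochastic.
Variables (n : nat) (W : nat -> nat -> R).
Hypotheses (W_nonneg : forall i j, (i < n)%nat -> (j < n)%nat -> 0 <= W i j)
  (W_row : forall i, (i < n)%nat -> rsum n (fun j => W i j) = 1)
  (W_col : forall j, (j < n)%nat -> rsum n (fun i => W i j) = 1).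

Lemma sdot_mix_le p X : sdot n p (mix n W X) (mix n W X) <= sdot n p X X.
Proof.
  unfold sdot, dot, mix.
  (* Jensen in every coordinate, then the column sums of W are 1 *)
  apply Rle_trans with (rsum n (fun i => rsum n (fun j => rsum p (fun l => W i j * X j l ^ 2)))).
  - apply rsum_le; intros i Hi. rewrite rsum_swap. apply rsum_le; intros l _.
    pose proof (sq_weighted_mean_le n (W i) (fun j => X j l)
                  (fun j => W_nonneg i j Hi) (W_row i Hi)) as J.
    rewrite <- Rsqr_pow2 in J. exact J.
  - rewrite rsum_swap. apply Req_le, rsum_ext; intros j Hj.
    rewrite rsum_swap. apply rsum_ext; intros l _.
    rewrite (rsum_ext n _ (fun i => X j l ^ 2 * W i j)) by (intros; ring).
    rewrite rsum_scal, W_col by exact Hj. ring.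
Qed.

Lemma snorm_mixpow_le p t X : snorm n p (mixpow n W t X) <= snorm n p X.
Proof.
  induction t as [|t IH]; simpl; [lra|]. eapply Rle_trans; [|exact IH].
  rewrite !snorm_sdot. apply sqrt_le_1_alt, sdot_mix_le.
Qed.

Lemma near_dgd_error_step p alpha g tk s0 u c : 0 <= c ->
  (forall i, (i < n)%nat -> forall x,
     dot p (vsub (fun l => x l - alpha * g i x l) (u i))
           (vsub (fun l => x l - alpha * g i x l) (u i))
     <= c ^ 2 * dot p (vsub x (u i)) (vsub x (u i))) ->
  forall k,
  snorm n p (ssub (near_dgd_y n W alpha g tk s0 (S k)) u)
  <= c * (snorm n p (ssub (near_dgd_y n W alpha g tk s0 k) u) + 2 * snorm n p u).
Proof.
  intros c_ge0 local k. set (Y := near_dgd_y n W alpha g tk s0 k).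
  set (X := mixpow n W (tk k) Y).
  apply Rle_trans with (c * snorm n p (ssub X u)).
  { apply snorm_le_local; [exact c_ge0|]. intros i Hi. exact (local i Hi (X i)). }
  apply Rmult_le_compat_l; [exact c_ge0|].
  (* X - u = Z^t (Y - u) + (Z^t u - u) *)
  eapply Rle_trans; [apply (snorm_ssub_triangle n p X (mixpow n W (tk k) u) u)|].
  unfold X. rewrite <- mixpow_ssub.
  pose proof (snorm_mixpow_le p (tk k) (ssub Y u)).
  pose proof (snorm_ssub_le n p (mixpow n W (tk k) u) u).
  pose proof (snorm_mixpow_le p (tk k) u). lra.
Qed.

End DoublyStochastic.

Lemma affine_recursion_bound (e : nat -> R) nu U : 0 < nu <= 2 -> 0 <= U -> 0 <= e 0%nat ->
  (forall k, e (S k) <= (1 - nu / 2) * (e k + 2 * U)) ->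
  forall k, e k <= e 0%nat + 4 / nu * U.
Proof.
  intros [nu_pos nu_le2] U_ge0 e0_ge0 step k. induction k as [|k IH].
  - assert (0 <= 4 / nu * U) by (apply Rmult_le_pos; [apply Rlt_le, Rdiv_lt_0_compat|]; lra).
    lra.
  - eapply Rle_trans; [apply step|].
    apply Rle_trans with ((1 - nu / 2) * (e 0%nat + 4 / nu * U + 2 * U));
      [apply Rmult_le_compat_l; lra|].
    replace ((1 - nu / 2) * (e 0%nat + 4 / nu * U + 2 * U))
      with (e 0%nat + 4 / nu * U - nu / 2 * e 0%nat - nu * U) by (field; lra).
    nra.
Qed.

Lemma rmaxn_ge n F i : (i < n)%nat -> F i <= rmaxn n F.
Proof.
  unfold rmaxn. intros Hi. assert (Hi' : (i <= n - 1)%nat) by lia. clear Hi.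
  induction (n - 1)%nat as [|m IH]; simpl.
  - replace i with 0%nat by lia. lra.
  - destruct (Nat.eq_dec i (S m)) as [->|Hne]; [apply Rmax_r|].
    eapply Rle_trans; [apply IH; lia | apply Rmax_l].
Qed.

Lemma mul_lt1_of_lt_inv_rmaxn n F a i : 0 < a -> a < 1 / rmaxn n F -> (i < n)%nat -> 0 < F i ->
  a * F i < 1.
Proof.
  intros a_pos a_small Hi Fi_pos. pose proof (rmaxn_ge n F i Hi).
  apply (Rmult_lt_compat_r (rmaxn n F)) in a_small; [|lra].
  replace (1 / rmaxn n F * rmaxn n F) with 1 in a_small by (field; lra). nra.
Qed.

Lemma rminn_le n F i : (i < n)%nat -> rminn n F <= F i.
Proof.
  unfold rminn. intros Hi. assert (Hi' : (i <= n - 1)%nat) by lia. clear Hi.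
  induction (n - 1)%nat as [|m IH]; simpl.
  - replace i with 0%nat by lia. lra.
  - destruct (Nat.eq_dec i (S m)) as [->|Hne]; [apply Rmin_r|].
    eapply Rle_trans; [apply Rmin_l | apply IH; lia].
Qed.

Lemma rminn_pos n F : (1 <= n)%nat -> (forall i, (i < n)%nat -> 0 < F i) -> 0 < rminn n F.
Proof.
  unfold rminn. intros n_pos F_pos.
  assert (F_pos' : forall i, (i <= n - 1)%nat -> 0 < F i) by (intros; apply F_pos; lia).
  clear F_pos. induction (n - 1)%nat as [|m IH]; simpl; [apply F_pos'; lia|].
  apply Rmin_glb_lt; [apply IH; intros; apply F_pos' | apply F_pos']; lia.
Qed.

Lemma harmonic_term_bounds a b : 0 < a -> 0 < b -> 0 < a * b / (a + b) < b.
Proof.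
  intros a_pos b_pos. split; [apply Rdiv_lt_0_compat; nra|].
  apply Rmult_lt_reg_r with (a + b); [lra|].
  replace (a * b / (a + b) * (a + b)) with (a * b) by (field; lra). nra.
Qed.

Theorem lemma3
  (n p : nat) (W : nat -> nat -> R)
  (f : nat -> vec -> R) (g : nat -> vec -> vec)
  (mu Lf : nat -> R) (ustar : nat -> vec) (s0 : vec) (alpha : R)
  (tk : nat -> nat) :
  (1 <= n)%nat ->
  mixing_matrix n W ->
  (forall i, (i < n)%nat -> is_gradient p (f i) (g i)) ->
  (forall i, (i < n)%nat -> 0 < mu i /\ strongly_convex p (mu i) (f i)) ->
  (forall i, (i < n)%nat -> 0 < Lf i /\ lipschitz_grad p (Lf i) (g i)) ->
  (forall i, (i < n)%nat -> forall z : vec, f i (ustar i) <= f i z) ->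
  0 < alpha -> alpha < 1 / rmaxn n Lf ->
  (forall k, (1 <= tk k)%nat) ->
  let gamma := rminn n (fun i => mu i * Lf i / (mu i + Lf i)) in
  let nu := 2 * alpha * gamma in
  let D := snorm n p (ssub (near_dgd_y n W alpha g tk s0 0) ustar)
           + (nu + 4) / nu * snorm n p ustar in
  forall k, (1 <= k)%nat ->
    snorm n p (near_dgd_x n W alpha g tk s0 k) <= D /\
    snorm n p (near_dgd_y n W alpha g tk s0 k) <= D.
Proof.
  intros n_pos [_ [W_nonneg [W_row [W_col _]]]] f_grad f_sc g_lip u_min alpha_pos alpha_small
    _ gamma nu D k _.
  assert (gamma_i : forall i, (i < n)%nat ->
            gamma <= mu i * Lf i / (mu i + Lf i) < Lf i /\ alpha * Lf i < 1).
  { intros i Hi. destruct (f_sc i Hi) as [mu_pos _], (g_lip i Hi) as [L_pos _].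
    pose proof (harmonic_term_bounds _ _ mu_pos L_pos).
    split; [split; [exact (rminn_le n _ i Hi) | lra] |].
    exact (mul_lt1_of_lt_inv_rmaxn n Lf alpha i alpha_pos alpha_small Hi L_pos). }
  assert (nu_bounds : 0 < nu <= 2).
  { destruct (gamma_i 0%nat n_pos) as [[] ?]. split; [|unfold nu; nra].
    apply Rmult_lt_0_compat; [lra|]. apply rminn_pos; [exact n_pos|].
    intros i Hi. apply harmonic_term_bounds; [apply f_sc | apply g_lip]; exact Hi. }
  set (e := fun k => snorm n p (ssub (near_dgd_y n W alpha g tk s0 k) ustar)).
  assert (e_step : forall k, e (S k) <= (1 - nu / 2) * (e k + 2 * snorm n p ustar)).
  { apply near_dgd_error_step; auto; [lra|]. intros i Hi x.
    destruct (gamma_i i Hi) as [[] ?], (f_sc i Hi) as [? ?], (g_lip i Hi) as [? ?].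
    eapply Rle_trans; [apply (gradient_step_contraction p (mu i) (Lf i) (f i) (g i)); auto; lra|].
    (* 1 - 2 alpha gamma_i <= 1 - nu <= (1 - nu/2)^2 *)
    apply Rmult_le_compat_r; [apply dot_nonneg | unfold nu; nra]. }
  pose proof (affine_recursion_bound e nu (snorm n p ustar) nu_bounds
                (sqrt_pos _) (sqrt_pos _) e_step k) as e_bound.
  pose proof (snorm_le_ssub_add n p (near_dgd_y n W alpha g tk s0 k) ustar) as y_bound.
  pose proof (snorm_mixpow_le n W W_nonneg W_row W_col p (tk k) (near_dgd_y n W alpha g tk s0 k)).
  replace D with (e 0%nat + snorm n p ustar + 4 / nu * snorm n p ustar)
    by (unfold D, e; field; lra).
  unfold near_dgd_x. fold (e k) in y_bound. lra.
Qed.
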